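(* Let $m,n\ge 0$ be integers. Every clique $C$ in ${\rm SR}(m,n)$ is of one of the following three types: 1. All pairs of distinct vertices of $C$ differ exactly in coordinates $j$ and $k$, for a fixed pair $j\ne k$; then $|C|\le n+1$. 2. $C=\{x+ae_i : i\in I\}$, where $a$ is an integer with $1\le a\le n$, $x\in\mathbb{N}^m$ has coordinate sum $n-a$, and $I\subseteq\{1,\dots,m\}$; then $|C|\le m$. 3. $C=\{x-ae_i : i\in I\}$, where $a$ is an integer with $a\ge 1$, $x\in\mathbb{N}^m$ has coordinate sum $n+a$, $I\subseteq\{1,\dots,m\}$, and $x_i\ge a$ for all $i\in I$; then $|C|\le m$.
   Context: $\mathbb{N}=\{0,1,2,\dots\}$. ${\rm SR}(m,n)$ is the graph whose vertices are the vectors in $\mathbb{N}^m$ with coordinate sum $n$, two vertices being adjacent when they differ in precisely two coordinate positions. $e_i$ is the $i$-th standard unit vector. A clique is a set of pairwise adjacent vertices. *)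

From mathcomp Require Import all_boot.
Set Implicit Arguments. Unset Strict Implicit. Unset Printing Implicit Defensive.

(* Vectors of N^m are finite functions 'I_m -> nat (coordinates indexed 0..m-1). *)
Notation vec m := {ffun 'I_m -> nat}.

Definition csum m (x : vec m) : nat := \sum_(i < m) x i.

Definition is_vertex m n (x : vec m) : bool := csum x == n.

Definition diffset m (x y : vec m) : {set 'I_m} := [set i | x i != y i].

Definition adj m (x y : vec m) : bool := #|diffset x y| == 2.

(* A clique of SR(m,n), given as a duplicate-free list of its vertices
   (every clique is finite since the vertex set is finite). *)
Definition is_clique m n (C : seq (vec m)) : Prop :=
  uniq C /\ (forall x, x \in C -> is_vertex n x) /\
  (forall x y, x \in C -> y \in C -> x != y -> adj x y).

Definition addu m (x : vec m) (a : nat) (i : 'I_m) : vec m :=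
  [ffun j => x j + (if j == i then a else 0)].
Definition subu m (x : vec m) (a : nat) (i : 'I_m) : vec m :=
  [ffun j => x j - (if j == i then a else 0)].

Definition type1 m n (C : seq (vec m)) : Prop :=
  (forall x y u v, x \in C -> y \in C -> u \in C -> v \in C ->
     x != y -> u != v -> diffset x y = diffset u v)
  /\ size C <= n.+1.

Definition type2 m n (C : seq (vec m)) : Prop :=
  (exists (a : nat) (x : vec m) (I : {set 'I_m}),
     [/\ 1 <= a <= n, csum x = n - a &
         C =i [seq addu x a i | i in I]])
  /\ size C <= m.

Definition type3 m n (C : seq (vec m)) : Prop :=
  (exists (a : nat) (x : vec m) (I : {set 'I_m}),
     [/\ 1 <= a, csum x = n + a, (forall i, i \in I -> a <= x i) &
         C =i [seq subu x a i | i in I]])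
  /\ size C <= m.

From mathcomp Require Import all_boot zify.
From Stdlib Require Import Classical_Prop.

(** If all
    pairs of vertices of a clique [C] differ in the same pair {j, k}, then
    [u |-> u j] is injective on [C] with values at most [n].  Otherwise some
    vertices x, y, z of [C] have diffset x y <> diffset x z; the symmetric
    difference of these two pairs lies in the pair diffset y z, so the three
    pairs are {s,k}, {s,l}, {k,l}, and setting coordinate s of x to y s gives
    a hub w from which x, y, z differ in the single coordinates s, k, l.  Any
    further vertex adjacent to these three spokes is again a spoke of w:
    otherwise it differs from w exactly at s, k, l, agreeing there with the
    spokes, and summing coordinates forces csum w = n.  All spokes of w with
    coordinate sum n deviate from w by n - csum w, which gives type 2 or 3
    according to its sign. *)

Set Implicit Arguments.
Unset Strict Implicit.
Unset Printing Implicit Defensive.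

Section PairsOfPairs.

Variable T : finType.
Implicit Types (A B D : {set T}) (a b : T).

Lemma card2_eq A a b : #|A| = 2 -> a != b -> a \in A -> b \in A -> A = [set a; b].
Proof.
move=> cA ab aA bA; apply/esym/eqP; rewrite eqEcard cA cards2 ab andbT.
by apply/subsetP => i; rewrite !inE => /orP[] /eqP ->.
Qed.

Lemma card2_neq_exists A B : #|A| = 2 -> #|B| = 2 -> A != B -> exists2 a, a \in A & a \notin B.
Proof.
move=> cA cB neAB; have /set0Pn[a] : A :\: B != set0.
  by rewrite setD_eq0; apply: contra neAB => sAB; rewrite eqEcard sAB cA cB.
by rewrite inE => /andP[aB aA]; exists a.
Qed.

Lemma triangle_pairs A B D : #|A| = 2 -> #|B| = 2 -> #|D| = 2 -> A != B ->
  A :\: B \subset D -> B :\: A \subset D ->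
  exists s k l, [/\ A = [set s; k], B = [set s; l], s \notin D & [&& s != k, s != l & k != l]].
Proof.
move=> cA cB cD neAB /subsetP sAB /subsetP sBA.
have [k kA kB] := card2_neq_exists cA cB neAB.
have [l lB lA] : exists2 l, l \in B & l \notin A by apply: card2_neq_exists; rewrite 1?eq_sym.
have kl : k != l by apply: contraNneq kB => ->.
have Dkl : D = [set k; l].
  by apply: card2_eq; [| | apply: sAB | apply: sBA]; rewrite ?inE ?kA ?kB ?lA ?lB.
have [s] : exists s, s \in A :\ k.
  by apply/set0Pn; rewrite -card_gt0; move: cA; rewrite (cardsD1 k) kA add1n => -[->].
rewrite !inE => /andP[sk sA].
have sl : s != l by apply: contraNneq lA => <-.
have sB : s \in B.
  apply: contraT => sB; have := sAB s; rewrite Dkl !inE sA sB (negbTE sk) (negbTE sl).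
  by move/(_ isT).
exists s, k, l; split; rewrite ?sk ?sl ?kl //.
- exact: card2_eq.
- exact: card2_eq.
- by rewrite Dkl !inE negb_or sk sl.
Qed.

End PairsOfPairs.

Lemma mem_image_spanned (T : finType) (U : eqType) (g : T -> U) (I : {set T}) (s : seq U) :
  (forall u, u \in s -> exists2 i, i \in I & u = g i) ->
  (forall i, i \in I -> g i \in s) -> s =i [seq g i | i in I].
Proof.
by move=> sI Is u; apply/idP/imageP => [/sI | [i /Is iI ->]].
Qed.

Lemma uniq_size_le_image (T : finType) (U : eqType) (g : T -> U) (A : {pred T}) (s : seq U) :
  uniq s -> s =i [seq g i | i in A] -> size s <= #|T|.
Proof.
move=> us sA; have /(uniq_leq_size us) : {subset s <= [seq g i | i in A]}.
  by move=> u; rewrite sA.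
by rewrite size_image => /leq_trans; apply; apply: max_card.
Qed.

Section Coordinates.

Variable m : nat.
Implicit Types (u v w x y z : vec m) (s t : 'I_m) (D : {set 'I_m}).

Lemma diffsetC u v : diffset u v = diffset v u.
Proof. by apply/setP => i; rewrite !inE eq_sym. Qed.

Lemma csum_agree_off D u v : diffset u v \subset D ->
  csum u + \sum_(i in D) v i = csum v + \sum_(i in D) u i.
Proof.
move=> /subsetP uvD; rewrite /csum !(bigID (mem D) predT) /=.
have -> : \sum_(i < m | ~~ (i \in D)) u i = \sum_(i < m | ~~ (i \in D)) v i.
  apply: eq_bigr => i iD; apply/eqP; apply: contraR iD => uv.
  by apply: uvD; rewrite inE.
by rewrite addnAC [RHS]addnC addnA.
Qed.

(* [v] is a spoke of [w] at [t] when [diffset w v = [set t]]. *)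
Lemma csum_spoke w v t : diffset w v = [set t] -> csum v + w t = csum w + v t.
Proof.
move=> wv; have := @csum_agree_off [set t] v w.
by rewrite !big_set1 diffsetC wv; apply.
Qed.

Lemma spoke_neq w v t : diffset w v = [set t] -> w t != v t.
Proof. by move=> wv; have := set11 t; rewrite -wv inE. Qed.

Lemma spoke_csum_neq w v t : diffset w v = [set t] -> csum w != csum v.
Proof.
move=> wv; apply/eqP => sum_wv; have := csum_spoke wv.
by move: (spoke_neq wv); rewrite sum_wv => /eqP; lia.
Qed.

Lemma spoke_agree w v t i : diffset w v = [set t] -> i != t -> v i = w i.
Proof.
move=> wv it; apply/esym/eqP; apply: contraR it => wvi.
by rewrite -in_set1 -wv inE.
Qed.

Lemma spoke_addu w v t : diffset w v = [set t] -> csum w < csum v ->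
  v = addu w (csum v - csum w) t.
Proof.
move=> wv lt_wv; have sum_wv := csum_spoke wv.
have vt : v t = w t + (csum v - csum w) by lia.
apply/ffunP => i; rewrite ffunE; have [-> // | it] := eqVneq i t.
by rewrite addn0 (spoke_agree wv it).
Qed.

Lemma spoke_subu w v t : diffset w v = [set t] -> csum v < csum w ->
  csum w - csum v <= w t /\ v = subu w (csum w - csum v) t.
Proof.
move=> wv lt_vw; have sum_wv := csum_spoke wv.
have vt : v t = w t - (csum w - csum v) by lia.
split; first lia.
apply/ffunP => i; rewrite ffunE; have [-> // | it] := eqVneq i t.
by rewrite subn0 (spoke_agree wv it).
Qed.

Lemma diffset_reset x v s :
  diffset [ffun i => if i == s then v s else x i] v = diffset x v :\ s.
Proof.
by apply/setP => i; rewrite !inE ffunE; case: (eqVneq i s) => [->|]; rewrite ?eqxx.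
Qed.

Lemma card_diffset_spoke u v w t : diffset w v = [set t] ->
  (t \in diffset u w) + #|diffset u v| = (t \in diffset u v) + #|diffset u w|.
Proof.
move=> wv; rewrite (cardsD1 t (diffset u v)) (cardsD1 t (diffset u w)).
have -> : diffset u v :\ t = diffset u w :\ t.
  apply/setP => i; rewrite !inE; case: (eqVneq i t) => //= it.
  by rewrite (spoke_agree wv it).
exact: addnCA.
Qed.

Lemma adj_spoke u v w t : diffset w v = [set t] -> adj u v ->
  [/\ #|diffset u w| <= 3, t \notin diffset u w -> #|diffset u w| = 1
    & #|diffset u w| = 3 -> u t = v t].
Proof.
move=> wv /eqP uv2; have := card_diffset_spoke u wv; rewrite uv2 [t \in diffset u v]inE.
have [tD | tD] := boolP (t \in diffset u w).
  by case: eqVneq => [-> | _] /= card_D; split => //; lia.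
have -> : u t != v t by move: tD; rewrite !inE negbK => /eqP ->; apply: spoke_neq wv.
by move=> /= card_D; split => //; lia.
Qed.

Lemma diffsetD_sub x y z : diffset x y :\: diffset x z \subset diffset y z.
Proof.
by apply/subsetP => i; rewrite !inE negbK => /andP[/eqP <-]; rewrite eq_sym.
Qed.

Lemma triangle_hub x y z : adj x y -> adj x z -> adj y z -> diffset x y != diffset x z ->
  exists w s k l, [/\ diffset w x = [set s], diffset w y = [set k],
                      diffset w z = [set l] & [&& s != k, s != l & k != l]].
Proof.
move=> /eqP cxy /eqP cxz /eqP cyz ne.
have sBA : diffset x z :\: diffset x y \subset diffset y z.
  by rewrite [diffset y z]diffsetC diffsetD_sub.
have [s [k [l [Exy Exz syz skl]]]] := triangle_pairs cxy cxz cyz ne (diffsetD_sub x y z) sBA.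
move: skl => /and3P[sk sl kl].
have yzs : y s = z s by move: syz; rewrite inE negbK => /eqP.
exists [ffun i => if i == s then y s else x i], s, k, l; split; rewrite ?sk ?sl ?kl //.
- have : s \in diffset x y by rewrite Exy !inE eqxx.
  rewrite inE eq_sym => yxs; apply/setP => i; rewrite !inE ffunE.
  by case: (eqVneq i s) => [-> | _]; rewrite ?eqxx.
- by rewrite diffset_reset Exy setU1K // inE.
- by rewrite yzs diffset_reset Exz setU1K // inE.
Qed.

Section Star.

Variables (w x y z : vec m) (j k l : 'I_m).
Hypotheses (wx : diffset w x = [set j]) (wy : diffset w y = [set k])
  (wz : diffset w z = [set l]).
Hypotheses (jk : j != k) (jl : j != l) (kl : k != l).

Lemma star_spoke u : csum y = csum x -> csum z = csum x -> csum u = csum x ->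
  adj u x -> adj u y -> adj u z -> exists i, diffset w u = [set i].
Proof.
move=> sum_y sum_z sum_u ux uy uz.
have [card_le3 j_in x_at_j] := adj_spoke wx ux.
have [_ k_in y_at_k] := adj_spoke wy uy.
have [_ l_in z_at_l] := adj_spoke wz uz.
have D0 : diffset u w != set0.
  apply: contra (spoke_csum_neq wx) => /eqP D0.
  have := @csum_agree_off set0 u w; rewrite D0 subxx !big_set0 !addn0 => /(_ isT).
  by rewrite sum_u => ->.
have [le1 | gt1] := leqP #|diffset u w| 1.
  have /cards1P[i Di] : #|diffset u w| == 1 by rewrite eqn_leq le1 card_gt0.
  by exists i; rewrite diffsetC.
have Dj : j \in diffset u w by apply: contraLR gt1 => /j_in ->.
have Dk : k \in diffset u w by apply: contraLR gt1 => /k_in ->.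
have Dl : l \in diffset u w by apply: contraLR gt1 => /l_in ->.
have card_jkl : #|j |: [set k; l]| = 3.
  by rewrite !cardsU1 cards1 !inE negb_or jk jl kl.
have D3 : diffset u w = j |: [set k; l].
  apply/esym/eqP; rewrite eqEcard card_jkl card_le3 andbT.
  by apply/subsetP => i /setU1P[| /set2P[]] ->.
have card3 : #|diffset u w| = 3 by rewrite D3.
exfalso; have := @csum_agree_off (j |: [set k; l]) u w; rewrite D3 subxx.
rewrite !big_setU1 ?big_set1 ?inE ?negb_or ?jk ?jl ?kl // => /(_ isT) /=.
rewrite (x_at_j card3) (y_at_k card3) (z_at_l card3).
have := csum_spoke wx; have := csum_spoke wy; have := csum_spoke wz.
move: (spoke_csum_neq wx); lia.
Qed.

Lemma clique_spokes n C : is_clique n C -> x \in C -> y \in C -> z \in C ->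
  forall u, u \in C -> exists i, diffset w u = [set i].
Proof.
move=> [_ [Cv Ca]] xC yC zC u uC.
have [-> | ux] := eqVneq u x; first by exists j.
have [-> | uy] := eqVneq u y; first by exists k.
have [-> | uz] := eqVneq u z; first by exists l.
have sum_n v : v \in C -> csum v = n by move/Cv/eqP.
by apply: star_spoke; rewrite ?Ca ?sum_n.
Qed.

End Star.

Lemma type2_of_spokes n C w : uniq C -> (forall u, u \in C -> is_vertex n u) ->
  (forall u, u \in C -> exists t, diffset w u = [set t]) -> csum w < n -> type2 n C.
Proof.
move=> Cu Cv Cs lt_wn; set a := n - csum w.
have CE : C =i [seq addu w a i | i in [set i | addu w a i \in C]].
  apply: mem_image_spanned => [u uC | i]; last by rewrite inE.
  have [t wu] := Cs u uC; have sum_u : csum u = n by apply/eqP/Cv.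
  have ua : u = addu w a t by rewrite /a -sum_u; apply: spoke_addu; rewrite ?sum_u.
  by exists t; rewrite // inE -ua.
split; last by have := uniq_size_le_image Cu CE; rewrite card_ord.
exists a, w, [set i | addu w a i \in C]; split; rewrite // /a.
- by apply/andP; split; lia.
- lia.
Qed.

Lemma type3_of_spokes n C w : uniq C -> (forall u, u \in C -> is_vertex n u) ->
  (forall u, u \in C -> exists t, diffset w u = [set t]) -> n < csum w -> type3 n C.
Proof.
move=> Cu Cv Cs lt_nw; set a := csum w - n.
set I := [set i | (a <= w i) && (subu w a i \in C)].
have CE : C =i [seq subu w a i | i in I].
  apply: mem_image_spanned => [u uC | i]; last by rewrite inE => /andP[].
  have [t wu] := Cs u uC; have sum_u : csum u = n by apply/eqP/Cv.
  have [le_a ua] : a <= w t /\ u = subu w a t.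
    by rewrite /a -sum_u; apply: spoke_subu; rewrite ?sum_u.
  by exists t; rewrite // inE le_a -ua.
split; last by have := uniq_size_le_image Cu CE; rewrite card_ord.
exists a, w, I; split; rewrite // /a; try lia.
by move=> i; rewrite inE => /andP[].
Qed.

Lemma size_le_of_inj_coord n C j : (forall u, u \in C -> is_vertex n u) ->
  uniq C -> {in C &, injective (fun u : vec m => u j)} -> size C <= n.+1.
Proof.
move=> Cv Cu inj; rewrite -(size_map (fun u : vec m => u j)) -(size_iota 0 n.+1).
apply: uniq_leq_size; first by rewrite map_inj_in_uniq.
move=> _ /mapP[u uC ->]; rewrite mem_iota add0n ltnS.
by rewrite -(eqP (Cv u uC)) /csum (bigD1 j) //= leq_addr.
Qed.

Lemma type1_of_common_diffset n C : is_clique n C ->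
  (forall x y z, x \in C -> y \in C -> z \in C -> x != y -> x != z ->
     diffset x y = diffset x z) -> type1 n C.
Proof.
move=> [Cu [Cv Ca]] common.
have pairs x y u v : x \in C -> y \in C -> u \in C -> v \in C -> x != y -> u != v ->
    diffset x y = diffset u v.
  move=> xC yC uC vC xy uv; have [exu | xu] := eqVneq x u; first by subst u; apply: common.
  by rewrite (common x y u) // diffsetC; apply: common; rewrite // eq_sym.
split=> //; have [le1 | gt1] := leqP (size C) 1; first exact: leq_trans le1 _.
pose x0 := nth [ffun=> 0] C 0; pose y0 := nth [ffun=> 0] C 1.
have x0C : x0 \in C by apply: mem_nth; apply: ltnW.
have y0C : y0 \in C by apply: mem_nth.
have x0y0 : x0 != y0 by rewrite nth_uniq // ltnW.
have /set0Pn[j jD] : diffset x0 y0 != set0.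
  by rewrite -card_gt0 (eqP (Ca _ _ x0C y0C x0y0)).
apply: (size_le_of_inj_coord (j := j)) => // u v uC vC /= uv.
apply/eqP; apply: contraLR jD => neq_uv.
by rewrite (pairs _ _ _ _ x0C y0C uC vC x0y0 neq_uv) inE uv eqxx.
Qed.

End Coordinates.

Theorem lemma9 (m n : nat) (C : seq {ffun 'I_m -> nat}) :
  is_clique n C -> type1 n C \/ type2 n C \/ type3 n C.
Proof.
move=> clC; have [Cu [Cv Ca]] := clC.
have [[x [y [z [xC yC zC /and3P[xy xz ne]]]]] | collinear] := classic (exists x y z,
  [/\ x \in C, y \in C, z \in C & [&& x != y, x != z & diffset x y != diffset x z]]).
  have yz : y != z by apply: contraNneq ne => ->.
  have [w [s [k [l [wx wy wz /and3P[sk sl kl]]]]]] :=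
    triangle_hub (Ca _ _ xC yC xy) (Ca _ _ xC zC xz) (Ca _ _ yC zC yz) ne.
  have spokes := clique_spokes wx wy wz sk sl kl clC xC yC zC.
  have := spoke_csum_neq wx; rewrite (eqP (Cv x xC)).
  case: ltngtP => // [lt_wn | lt_nw] _; right; [left | right].
  - exact: type2_of_spokes Cu Cv spokes lt_wn.
  - exact: type3_of_spokes Cu Cv spokes lt_nw.
left; apply: type1_of_common_diffset => // x y z xC yC zC xy xz.
have [// | ne] := eqVneq (diffset x y) (diffset x z).
by case: collinear; exists x, y, z; rewrite xy xz ne.
Qed.
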